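(* Fix an instance of the data in the context and a cycle basis of the network graph $(\mathcal B,\mathcal L)$. For each cycle $C$ of the basis, with buses labeled $1,\dots,n$ in cyclic order ($n=|C|$) and oriented edges $(1,2),\dots,(n-1,n),(n,1)$, impose: (1) if $n=3$: $s_{12}c_{33}+c_{23}s_{31}+s_{23}c_{31}=0$ and $c_{12}c_{33}-c_{23}c_{31}+s_{23}s_{31}=0$; (2) if $n=4$: $s_{12}c_{34}+c_{12}s_{34}+s_{23}c_{41}+c_{23}s_{41}=0$ and $c_{12}c_{34}-s_{12}s_{34}-c_{23}c_{41}+s_{23}s_{41}=0$; (3) if $n\ge5$ is odd: auxiliary real variables $\tilde c_{1,2i},\tilde s_{1,2i}$ for $i=2,\dots,\frac{n-1}{2}$, with $\tilde c_{12}=c_{12}$, $\tilde s_{12}=s_{12}$, and constraints, for $i=2,\dots,\frac{n-1}{2}$: $\tilde c_{1,2i-2}c_{2i-1,2i}-\tilde s_{1,2i-2}s_{2i-1,2i}-\tilde c_{1,2i}c_{2i-2,2i-1}-\tilde s_{1,2i}s_{2i-2,2i-1}=0$, $\tilde s_{1,2i-2}c_{2i-1,2i}+\tilde c_{1,2i-2}s_{2i-1,2i}-\tilde s_{1,2i}c_{2i-2,2i-1}+\tilde c_{1,2i}s_{2i-2,2i-1}=0$; and $\tilde c_{1,n-1}c_{n-1,n}-\tilde s_{1,n-1}s_{n-1,n}-c_{n,1}c_{n-1,n-1}=0$, $\tilde s_{1,n-1}c_{n-1,n}+\tilde c_{1,n-1}s_{n-1,n}+s_{n,1}c_{n-1,n-1}=0$;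 $\tilde s_{1,i}^2+\tilde c_{1,i}^2=c_{11}c_{ii}$ for every even $i$ with $2\le i\le n-1$; and $c_{ij}^2+s_{ij}^2=c_{ii}c_{jj}$ for every edge $(i,j)$ of $C$; (4) if $n\ge6$ is even: auxiliary real variables $\tilde c_{1,2i},\tilde s_{1,2i}$ for $i=2,\dots,\frac n2-1$, with $\tilde c_{12}=c_{12}$, $\tilde s_{12}=s_{12}$, $\tilde c_{1,n}=c_{1,n}$, $\tilde s_{1,n}=s_{1,n}$, and constraints, for $i=2,\dots,\frac n2$: $\tilde c_{1,2i-2}c_{2i-1,2i}-\tilde s_{1,2i-2}s_{2i-1,2i}-\tilde c_{1,2i}c_{2i-2,2i-1}-\tilde s_{1,2i}s_{2i-2,2i-1}=0$, $\tilde s_{1,2i-2}c_{2i-1,2i}+\tilde c_{1,2i-2}s_{2i-1,2i}-\tilde s_{1,2i}c_{2i-2,2i-1}+\tilde c_{1,2i}s_{2i-2,2i-1}=0$; $\tilde s_{1,i}^2+\tilde c_{1,i}^2=c_{11}c_{ii}$ for every even $i$ with $2\le i\le n-1$; and $c_{ij}^2+s_{ij}^2=c_{ii}c_{jj}$ for every edge $(i,j)$ of $C$. Then: (a) (validity) for every feasible point $(p^g,q^g,c,s,\theta)$ of the OPF formulation in the context, there exist values of the auxiliary variables such that all constraints (1)–(4) hold for every cycle of the basis; and (b) every $(p^g,q^g,c,s)$ satisfying (ALT), the coupling equalities $c_{ij}^2+s_{ij}^2=c_{ii}c_{jj}$ for all lines, and constraints (1)–(4) (for some values of the auxiliary variables)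 satisfies, for each cycle $C$ in the basis, $\sum_{(i,j)\in C}\operatorname{atan2}(s_{ij},c_{ij})=2\pi k$ for some integer $k$ (sum over the oriented edges of $C$).
   Context: Data: finite bus set $\mathcal B$, line set $\mathcal L$ (unordered pairs of distinct buses; variables $c_{ij},s_{ij}$ for both orientations of each line), $\delta(i)$ the neighbors of $i$, generator set $\mathcal G\subseteq\mathcal B$, reals $G_{ij},B_{ij}$ (lines), $G_{ii},B_{ii}$ (buses), demands $p_i^d,q_i^d$, voltage bounds $0<\underline V_i\le\overline V_i$, generator bounds $p_i^{\min}\le p_i^{\max}$, $q_i^{\min}\le q_i^{\max}$ ($i\in\mathcal G$). Variables $p_i^g,q_i^g$ for $i\in\mathcal G$, with $p_i^g=q_i^g=0$ for $i\notin\mathcal G$. (ALT): $p_i^g-p_i^d=G_{ii}c_{ii}+\sum_{j\in\delta(i)}(G_{ij}c_{ij}-B_{ij}s_{ij})$, $q_i^g-q_i^d=-B_{ii}c_{ii}+\sum_{j\in\delta(i)}(-B_{ij}c_{ij}-G_{ij}s_{ij})$, $\underline V_i^2\le c_{ii}\le\overline V_i^2$ ($i\in\mathcal B$); $c_{ij}=c_{ji}$, $s_{ij}=-s_{ji}$ (lines); $p_i^{\min}\le p_i^g\le p_i^{\max}$, $q_i^{\min}\le q_i^g\le q_i^{\max}$ ($i\in\mathcal G$). OPF formulation: variables $(p^g,q^g,c,s,\theta)$ with $\theta\in\mathbb R^{\mathcal B}$ satisfying (ALT), $c_{ij}^2+s_{ij}^2=c_{ii}c_{jj}$ and $\theta_j-\theta_i=\operatorname{atan2}(s_{ij},c_{ij})$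 for every line $(i,j)$. Here $\operatorname{atan2}(y,x)\in(-\pi,\pi]$ is the angle of the point $(x,y)\neq(0,0)$. A cycle basis is a basis of the cycle space of the graph consisting of cycles. *)

From HB Require Import structures.
From mathcomp Require Import all_boot all_order all_algebra.
From mathcomp Require Import all_classical all_reals all_analysis.
Set Implicit Arguments. Unset Strict Implicit. Unset Printing Implicit Defensive.
Import Order.TTheory GRing.Theory Num.Theory.
Local Open Scope ring_scope.

Section OPF.
Variable R : realType.

(* atan2 y x : the angle in (-pi, pi] of the point (x, y) <> (0,0);
   the value at (0,0) (where atan2 is undefined) is fixed to 0. *)
Definition atan2 (y x : R) : R :=
  if 0 < x then atan (y / x)
  else if x < 0 then (if 0 <= y then atan (y / x) + pi else atan (y / x) - pi)
  else if 0 < y then pi / 2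
  else if y < 0 then - (pi / 2)
  else 0.

Variable Bus : finType.

(* The network is given by its lines, each with a fixed orientation:
   [ln i j] means that {i,j} is a line written (i,j).  The (undirected)
   adjacency is [adj]. *)
Definition adj (ln : rel Bus) : rel Bus := fun i j => ln i j || ln j i.

Definition lines_ok (ln : rel Bus) : Prop :=
  (forall i, ~~ ln i i) /\ (forall i j, ln i j -> ~~ ln j i).

Definition lineset (ln : rel Bus) : {set {set Bus}} :=
  [set e : {set Bus} | [exists x, exists y, ln x y && (e == [set x; y])]].

Definition is_cycle (ln : rel Bus) (p : seq Bus) : Prop :=
  [/\ uniq p, (2 < size p)%N & cycle (adj ln) p].

Definition cyc_oedges (p : seq Bus) : seq (Bus * Bus) := zip p (rot 1 p).

Definition cyc_edges (p : seq Bus) : {set {set Bus}} :=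
  [set e : {set Bus} | has (fun x => e == [set x.1; x.2]) (cyc_oedges p)].

Definition in_cycle_space (ln : rel Bus) (F : {set {set Bus}}) : Prop :=
  F \subset lineset ln /\ forall v : Bus, ~~ odd #|[set e in F | v \in e]|.

Definition gf2_sum (m : nat) (cyc : 'I_m -> seq Bus) (S : {set 'I_m})
  : {set {set Bus}} :=
  [set e : {set Bus} | odd #|[set k in S | e \in cyc_edges (cyc k)]|].

Definition cycle_basis (ln : rel Bus) (m : nat) (cyc : 'I_m -> seq Bus) : Prop :=
  [/\ forall k, is_cycle ln (cyc k),
      forall S : {set 'I_m}, gf2_sum cyc S = finset.set0 -> S = finset.set0 &
      forall F, in_cycle_space ln F -> exists S, gf2_sum cyc S = F].

(* Constraints (1)-(4) for one cycle p (buses p`_0,...,p`_(n-1) labelled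
   1,...,n), with auxiliary variables ct k = ~c_{1,k}, st k = ~s_{1,k}
   (only the values at the relevant even k matter). *)
Definition cycle_constraints (c s : Bus -> Bus -> R) (p : seq Bus)
  (ct st : nat -> R) : Prop :=
  match p with
  | [::] => True
  | x0 :: _ =>
    let n := size p in
    let V k := nth x0 p k.-1 in
    let C i j := c (V i) (V j) in
    let S i j := s (V i) (V j) in
    let rec_cons (i : nat) :=
      ct (2*i-2)%N * C (2*i-1)%N (2*i)%N - st (2*i-2)%N * S (2*i-1)%N (2*i)%N
        - ct (2*i)%N * C (2*i-2)%N (2*i-1)%N - st (2*i)%N * S (2*i-2)%N (2*i-1)%N = 0
      /\
      st (2*i-2)%N * C (2*i-1)%N (2*i)%N + ct (2*i-2)%N * S (2*i-1)%N (2*i)%N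
        - st (2*i)%N * C (2*i-2)%N (2*i-1)%N + ct (2*i)%N * S (2*i-2)%N (2*i-1)%N = 0 in
    let norm_cons :=
      forall i : nat, (2 <= i <= n - 1)%N -> ~~ odd i ->
        st i ^+ 2 + ct i ^+ 2 = C 1%N 1%N * C i i in
    let edge_cons :=
      forall e, e \in cyc_oedges p ->
        c e.1 e.2 ^+ 2 + s e.1 e.2 ^+ 2 = c e.1 e.1 * c e.2 e.2 in
    if n == 3%N then
      S 1%N 2%N * C 3%N 3%N + C 2%N 3%N * S 3%N 1%N + S 2%N 3%N * C 3%N 1%N = 0 /\
      C 1%N 2%N * C 3%N 3%N - C 2%N 3%N * C 3%N 1%N + S 2%N 3%N * S 3%N 1%N = 0
    else if n == 4%N then
      S 1%N 2%N * C 3%N 4%N + C 1%N 2%N * S 3%N 4%N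
        + S 2%N 3%N * C 4%N 1%N + C 2%N 3%N * S 4%N 1%N = 0 /\
      C 1%N 2%N * C 3%N 4%N - S 1%N 2%N * S 3%N 4%N
        - C 2%N 3%N * C 4%N 1%N + S 2%N 3%N * S 4%N 1%N = 0
    else if odd n then
      [/\ ct 2%N = C 1%N 2%N /\ st 2%N = S 1%N 2%N,
          forall i : nat, (2 <= i <= n.-1./2)%N -> rec_cons i,
          ct n.-1 * C n.-1 n - st n.-1 * S n.-1 n - C n 1%N * C n.-1 n.-1 = 0 /\
          st n.-1 * C n.-1 n + ct n.-1 * S n.-1 n + S n 1%N * C n.-1 n.-1 = 0,
          norm_cons & edge_cons]
    else
      [/\ ct 2%N = C 1%N 2%N /\ st 2%N = S 1%N 2%N,
          ct n = C 1%N n /\ st n = S 1%N n,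
          forall i : nat, (2 <= i <= n./2)%N -> rec_cons i,
          norm_cons & edge_cons]
  end.

Definition ALT (ln : rel Bus) (Gen : {set Bus}) (G B : Bus -> Bus -> R)
  (pd qd Vlo Vhi pmin pmax qmin qmax : Bus -> R)
  (pg qg : Bus -> R) (c s : Bus -> Bus -> R) : Prop :=
  [/\ forall i, pg i - pd i
        = G i i * c i i + \sum_(j | adj ln i j) (G i j * c i j - B i j * s i j),
      forall i, qg i - qd i
        = - B i i * c i i + \sum_(j | adj ln i j) (- B i j * c i j - G i j * s i j),
      forall i, Vlo i ^+ 2 <= c i i <= Vhi i ^+ 2,
      forall i j, ln i j -> c i j = c j i /\ s i j = - s j i
    & (forall i, i \in Gen -> pmin i <= pg i <= pmax i /\ qmin i <= qg i <= qmax i)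
      /\ (forall i, i \notin Gen -> pg i = 0 /\ qg i = 0)].

Definition coupling (ln : rel Bus) (c s : Bus -> Bus -> R) : Prop :=
  forall i j, ln i j -> c i j ^+ 2 + s i j ^+ 2 = c i i * c j j.

Definition OPF_feasible (ln : rel Bus) (Gen : {set Bus}) (G B : Bus -> Bus -> R)
  (pd qd Vlo Vhi pmin pmax qmin qmax : Bus -> R)
  (pg qg : Bus -> R) (c s : Bus -> Bus -> R) (theta : Bus -> R) : Prop :=
  [/\ ALT ln Gen G B pd qd Vlo Vhi pmin pmax qmin qmax pg qg c s,
      coupling ln c s &
      forall i j, ln i j -> theta j - theta i = atan2 (s i j) (c i j)].

End OPF.

(* Put z_e := c_e + i s_e for every oriented edge e of a cycle.  As
   z_e = |z_e| exp(i atan2(s_e, c_e)), the sum of the angles around the cycle lies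
   in 2πℤ exactly when the product of the z_e is a positive real number.  With
   w_k := c̃_{1k} + i s̃_{1k}, each pair of recursive constraints reads
   w_{2i-2} z_{2i-1} = w_{2i} conj(z_{2i-2}); since z conj(z) = |z|^2 > 0, w_{2i} is
   a positive multiple of z_1 ⋯ z_{2i-1}, and the closing constraints (directly, for
   n = 3, 4) make z_1 ⋯ z_n a positive multiple of some |z|^2.  Conversely, at a
   feasible OPF point c_ij + i s_ij = v_i v_j exp(i(θ_j - θ_i)) with v_i = √c_ii,
   and choosing c̃_{1k} + i s̃_{1k} = v_1 v_k exp(i(θ_k - θ_1)) turns every
   constraint into a polynomial identity. *)

From HB Require Import structures.
From mathcomp Require Import all_boot all_order all_algebra.
From mathcomp Require Import all_classical all_reals all_analysis.
From mathcomp Require Import complex ring lra zify.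
Import Order.TTheory GRing.Theory Num.Theory.
Local Open Scope ring_scope.

Set Implicit Arguments.
Unset Strict Implicit.
Unset Printing Implicit Defensive.

Section Polar.
Variable R : realType.
Local Open Scope complex_scope.

Definition cis (a : R) : R[i] := cos a +i* sin a.

Lemma cisD a b : cis (a + b) = cis a * cis b.
Proof. by rewrite /cis cosD sinD; simpc; congr (_ +i* _); ring. Qed.

Lemma sin_atan (t : R) : sin (atan t) = t * cos (atan t).
Proof.
have cos_neq0 : cos (atan t) != 0.
  by rewrite gt_eqF // cos_gt0_pihalf // atan_gtNpi2 atan_ltpi2.
by rewrite -{2}(atanK t) /tan mulfVK.
Qed.

Lemma polar_atan (x y : R) : 0 < x ->
  x = Num.sqrt (x ^+ 2 + y ^+ 2) * cos (atan (y / x)) /\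
  y = Num.sqrt (x ^+ 2 + y ^+ 2) * sin (atan (y / x)).
Proof.
move=> x_gt0; set t := y / x.
have sqrt_gt0 : 0 < Num.sqrt (1 + t ^+ 2).
  by rewrite sqrtr_gt0 ltr_pwDl ?sqr_ge0.
have -> : x ^+ 2 + y ^+ 2 = (x * Num.sqrt (1 + t ^+ 2)) ^+ 2.
  by rewrite exprMn sqr_sqrtr ?addr_ge0 ?sqr_ge0 // /t; field; rewrite gt_eqF.
move: sqrt_gt0; rewrite /t => sqrt_gt0.
rewrite sin_atan cos_atan sqrtr_sqr gtr0_norm ?mulr_gt0 //.
by split; field; rewrite ?gt_eqF.
Qed.

Lemma polar_atan2 (x y : R) :
  x = Num.sqrt (x ^+ 2 + y ^+ 2) * cos (atan2 y x) /\
  y = Num.sqrt (x ^+ 2 + y ^+ 2) * sin (atan2 y x).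
Proof.
rewrite /atan2; have [x_gt0|x_le0] := ltP 0 x; first exact: polar_atan.
have [x_lt0|x_ge0] := ltP x 0.
  have [ex ey] : _ /\ _ := @polar_atan (- x) (- y) ltac:(by rewrite oppr_gt0).
  rewrite !sqrrN invrN mulrNN in ex ey.
  by case: ifP => _; rewrite cosD sinD ?cosN ?sinN cospi sinpi;
    (split; [rewrite -{1}[x]opprK {1}ex | rewrite -{1}[y]opprK {1}ey]; ring).
have -> : x = 0 by apply/eqP; rewrite eq_le x_le0 x_ge0.
rewrite expr0n add0r sqrtr_sqr.
have [y_gt0|y_le0] := ltP 0 y.
  by rewrite gtr0_norm // cos_pihalf sin_pihalf mulr0 mulr1.
have [y_lt0|y_ge0] := ltP y 0.
  by rewrite ltr0_norm // cosN sinN cos_pihalf sin_pihalf mulr0 mulrN1 opprK.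
have -> : y = 0 by apply/eqP; rewrite eq_le y_le0 y_ge0.
by rewrite normr0 !mul0r.
Qed.

Lemma polar_atan2_angle (x y a b ta tb : R) :
  0 <= a -> 0 <= b -> x ^+ 2 + y ^+ 2 = a * b -> tb - ta = atan2 y x ->
  x = Num.sqrt a * Num.sqrt b * (cos ta * cos tb + sin ta * sin tb) /\
  y = Num.sqrt a * Num.sqrt b * (cos ta * sin tb - sin ta * cos tb).
Proof.
move=> a_ge0 b_ge0 xy_ab angle; have [ex ey] := polar_atan2 x y.
rewrite xy_ab sqrtrM // -angle cosB sinB in ex ey.
by split; [rewrite {1}ex | rewrite {1}ey]; ring.
Qed.

Lemma complex_polar (x y : R) :
  x +i* y = (Num.sqrt (x ^+ 2 + y ^+ 2))%:C * cis (atan2 y x).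
Proof. by have [ex ey] := polar_atan2 x y; rewrite /cis; simpc; congr (_ +i* _). Qed.

Lemma prod_complex_polar (I : Type) (l : seq I) (x y : I -> R) :
  \prod_(e <- l) (x e +i* y e) =
  (\prod_(e <- l) Num.sqrt (x e ^+ 2 + y e ^+ 2))%:C *
  cis (\sum_(e <- l) atan2 (y e) (x e)).
Proof.
elim: l => [|e l IH]; first by rewrite !big_nil /cis cos0 sin0; simpc.
by rewrite !big_cons IH complex_polar cisD rmorphM /=; ring.
Qed.

Lemma periodicz (f : R -> R) (T : R) : periodic f T ->
  forall (k : int) a, f (a + k%:~R * T) = f a.
Proof.
move=> fT [n|n] a; first by rewrite -pmulrn mulr_natl periodicn.
rewrite NegzE mulrNz mulNr -{2}[a](subrK (T *+ n.+1)) mulr_natl.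
by rewrite (periodicn fT).
Qed.

Lemma sin_eq0_cos_gt0 (x : R) : sin x = 0 -> 0 < cos x ->
  exists k : int, x = 2 * pi * k%:~R.
Proof.
move=> sinx0 cosx_gt0; set T : R := pi *+ 2.
have T_gt0 : 0 < T by rewrite /T mulr2n addr_gt0 // pi_gt0.
set k := Num.floor (x / T); set y := x - k%:~R * T.
have xE : x = y + k%:~R * T by rewrite /y subrK.
have siny0 : sin y = 0 by rewrite -sinx0 xE periodicz //; exact: sinD2pi.
have cosy_gt0 : 0 < cos y.
  by rewrite (_ : cos y = cos x) // xE periodicz //; exact: cosD2pi.
have /andP[kx xk] := floor_itv (x / T); rewrite -/k in kx xk.
have y_ge0 : 0 <= y by rewrite subr_ge0 -ler_pdivlMr.
have y_ltT : y < T.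
  by rewrite ltr_pdivrMr // intrD mulrDl mul1r in xk; rewrite /y; lra.
have pi_gt0 := @pi_gt0 R.
suff y0 : y = 0 by exists k; rewrite xE y0 add0r /T mulr2n; ring.
have [y_ltpi|y_gepi] := ltP y pi.
  have [y_gt0|y_le0] := ltP 0 y; last by apply/eqP; rewrite eq_le y_le0.
  by have := sin_gt0_pi (x := y); rewrite y_gt0 y_ltpi siny0 ltxx => /(_ isT).
have [y_pi|y_gtpi] := eqVneq y pi; first by move: cosy_gt0; rewrite y_pi cospi; lra.
have y_gtpi' : pi < y by rewrite lt_neqAle eq_sym y_gtpi.
have := sin_gt0_pi (x := y - pi).
rewrite sinB cospi sinpi siny0 mul0r mulr0 subr0 ltxx subr_gt0 y_gtpi' ltrBlDr.
by rewrite /T mulr2n in y_ltT; rewrite y_ltT => /(_ isT).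
Qed.

Lemma cis_gt0 a : 0 < cis a -> exists k : int, a = 2 * pi * k%:~R.
Proof.
by rewrite ltcE /= => /andP[/eqP/esym sina0 cosa_gt0]; exact: sin_eq0_cos_gt0.
Qed.

Lemma sum_atan2_2pi (I : Type) (l : seq I) (x y : I -> R) :
  0 < \prod_(e <- l) (x e +i* y e) ->
  exists k : int, \sum_(e <- l) atan2 (y e) (x e) = 2 * pi * k%:~R.
Proof.
rewrite prod_complex_polar; set r := \prod_(e <- l) _ => prod_gt0.
have r_ge0 : 0 <= r by apply: prodr_ge0 => e _; exact: sqrtr_ge0.
have r_gt0 : 0 < r%:C.
  rewrite ltcR lt_neqAle r_ge0 andbT; apply: contraTneq prod_gt0 => <-.
  by rewrite mul0r ltxx.
by apply: cis_gt0; rewrite -(pmulr_rgt0 _ r_gt0).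
Qed.

End Polar.

Section ConjugateChain.
Variable C : numClosedFieldType.
Implicit Types z w : nat -> C.

Definition conj_rec z w m : Prop := forall i, (2 <= i <= m)%N ->
  w (2 * i - 2)%N * z (2 * i - 1)%N = w (2 * i)%N * (z (2 * i - 2)%N)^*.

Lemma conj_chain_prod z w m :
  w 2 = z 1 ->
  conj_rec z w m ->
  (forall k, (0 < k < 2 * m)%N -> z k != 0) ->
  forall i, (0 < i <= m)%N ->
    exists2 q : C, 0 < q & \prod_(1 <= k < 2 * i) z k = q * w (2 * i)%N.
Proof.
move=> w2 wS z_neq0; elim=> [//|[|i] IH] /andP[_ im].
  by exists 1; rewrite ?ltr01 // big_nat1 mul1r w2.
have [q q_gt0 IHq] := IH (ltnW im).
have e2 : (2 * i.+2 - 2 = 2 * i.+1)%N by lia.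
have e1 : (2 * i.+2 - 1 = (2 * i.+1).+1)%N by lia.
have e0 : (2 * i.+2 = (2 * i.+1).+2)%N by lia.
have := wS i.+2; rewrite e2 e1 e0 !ltnS im andbT => /(_ isT) wSi.
exists (q * (z (2 * i.+1)%N * (z (2 * i.+1)%N)^*)).
  by rewrite mulr_gt0 // mul_conjC_gt0; apply: z_neq0; lia.
have a_gt0 : (0 < 2 * i.+1)%N by lia.
set a := (2 * i.+1)%N in wSi IHq a_gt0 *.
rewrite big_nat_recr // big_nat_recr // IHq /=.
by transitivity (q * z a * (w a * z a.+1)); [ring | rewrite wSi; ring].
Qed.

Lemma odd_cycle_prod_gt0 z w m d :
  (0 < m)%N -> w 2 = z 1 ->
  conj_rec z w m ->
  (forall k, (0 < k <= (2 * m).+1)%N -> z k != 0) ->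
  0 < d -> w (2 * m)%N * z (2 * m)%N = d * (z (2 * m).+1)^* ->
  0 < \prod_(1 <= k < (2 * m).+2) z k.
Proof.
move=> m_gt0 w2 wS z_neq0 d_gt0 wz.
have z_neq0' k : (0 < k < 2 * m)%N -> z k != 0.
  by move=> k_range; apply: z_neq0; lia.
have m_range : (0 < m <= m)%N by rewrite m_gt0 leqnn.
have [q q_gt0 Pm] := conj_chain_prod w2 wS z_neq0' m_range.
have a_gt0 : (0 < 2 * m)%N by lia.
have last_neq0 : z (2 * m).+1 != 0 by apply: z_neq0; rewrite leqnn.
set a := (2 * m)%N in wz Pm a_gt0 last_neq0 *.
rewrite big_nat_recr // big_nat_recr // Pm /=.
have -> : q * w a * z a * z a.+1 = q * d * (z a.+1 * (z a.+1)^*).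
  by transitivity (q * (w a * z a) * z a.+1); [ring | rewrite wz; ring].
by apply: mulr_gt0; [apply: mulr_gt0 | rewrite mul_conjC_gt0].
Qed.

Lemma even_cycle_prod_gt0 z w m :
  (0 < m)%N -> w 2 = z 1 ->
  conj_rec z w m ->
  (forall k, (0 < k <= 2 * m)%N -> z k != 0) ->
  w (2 * m)%N = (z (2 * m)%N)^* ->
  0 < \prod_(1 <= k < (2 * m).+1) z k.
Proof.
move=> m_gt0 w2 wS z_neq0 wz.
have z_neq0' k : (0 < k < 2 * m)%N -> z k != 0.
  by move=> k_range; apply: z_neq0; lia.
have m_range : (0 < m <= m)%N by rewrite m_gt0 leqnn.
have [q q_gt0 Pm] := conj_chain_prod w2 wS z_neq0' m_range.
have a_gt0 : (0 < 2 * m)%N by lia.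
set a := (2 * m)%N in wz Pm a_gt0 z_neq0 *.
rewrite big_nat_recr // Pm wz /= -mulrA mulr_gt0 // mulrC mul_conjC_gt0.
by rewrite z_neq0 // a_gt0 /=.
Qed.

Lemma cycle3_prod_gt0 z (d : C) :
  0 < d -> z 2 * z 3 != 0 -> z 1 * d = (z 2 * z 3)^* ->
  0 < \prod_(1 <= k < 4) z k.
Proof.
move=> d_gt0 z23_neq0 zd; rewrite big_ltn // big_ltn // big_nat1.
rewrite -(pmulr_lgt0 _ d_gt0) (_ : _ * d = z 1 * d * (z 2 * z 3)); last by ring.
by rewrite zd mulrC mul_conjC_gt0.
Qed.

Lemma cycle4_prod_gt0 z :
  z 2 * z 4 != 0 -> z 1 * z 3 = (z 2 * z 4)^* ->
  0 < \prod_(1 <= k < 5) z k.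
Proof.
move=> z24_neq0 zz; rewrite big_ltn // big_ltn // big_ltn // big_nat1.
rewrite (_ : z 1 * _ = z 1 * z 3 * (z 2 * z 4)); last by ring.
by rewrite zz mulrC mul_conjC_gt0.
Qed.

End ConjugateChain.

Lemma nth_rcons_self (T : Type) (x0 : T) (t : seq T) i :
  nth x0 (rcons t x0) i = nth x0 t i.
Proof.
rewrite nth_rcons; case: ltnP => // t_le_i.
by rewrite nth_default //; case: eqP.
Qed.

Lemma cyc_oedges_nth (T : finType) (x0 : T) (t : seq T) :
  cyc_oedges (x0 :: t) =
  [seq (nth x0 (x0 :: t) k.-1, nth x0 (x0 :: t) k) | k <- index_iota 1 (size t).+2].
Proof.
rewrite /cyc_oedges rot1_cons /index_iota subSS subn0.
apply: (@eq_from_nth _ (x0, x0)) => [|i].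
  by rewrite size_zip size_rcons size_map size_iota minnn.
rewrite size_zip size_rcons minnn => i_lt.
rewrite nth_zip ?size_rcons // (nth_map 0%N) ?size_iota // nth_iota //.
by rewrite add1n nth_rcons_self.
Qed.

(* The clause [rec_cons i] of [cycle_constraints]. *)
Definition rec_constraint (R : realType) (T : Type) (c s : T -> T -> R)
    (x0 : T) (t : seq T) (ct st : nat -> R) (i : nat) : Prop :=
  let V k := nth x0 (x0 :: t) k.-1 in
  ct (2 * i - 2)%N * c (V (2 * i - 1)%N) (V (2 * i)%N)
    - st (2 * i - 2)%N * s (V (2 * i - 1)%N) (V (2 * i)%N)
    - ct (2 * i)%N * c (V (2 * i - 2)%N) (V (2 * i - 1)%N)
    - st (2 * i)%N * s (V (2 * i - 2)%N) (V (2 * i - 1)%N) = 0 /\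
  st (2 * i - 2)%N * c (V (2 * i - 1)%N) (V (2 * i)%N)
    + ct (2 * i - 2)%N * s (V (2 * i - 1)%N) (V (2 * i)%N)
    - st (2 * i)%N * c (V (2 * i - 2)%N) (V (2 * i - 1)%N)
    + ct (2 * i)%N * s (V (2 * i - 2)%N) (V (2 * i - 1)%N) = 0.

Lemma cycle_nth (T : Type) (e : rel T) (x0 : T) (t : seq T) :
  cycle e (x0 :: t) ->
  forall k, (k <= size t)%N -> e (nth x0 (x0 :: t) k) (nth x0 (x0 :: t) k.+1).
Proof.
move=> /(pathP x0) e_nth k k_le; have := e_nth k.
rewrite size_rcons ltnS k_le /= nth_rcons_self => /(_ isT).
by case: k {k_le} => //= k; rewrite nth_rcons_self.
Qed.

Section CycleConstraints.
Variables (R : realType) (T : finType) (c s : T -> T -> R).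
Local Open Scope complex_scope.

Definition zline (x y : T) : R[i] := c x y +i* s x y.

Variables (x0 : T) (t : seq T) (ct st : nat -> R).
(* Buses are numbered 1..n; past the end [nth] returns the default x0, so
   V (n+1) = V 1 and z n is the closing edge (n, 1). *)
Local Notation V k := (nth x0 (x0 :: t) k.-1).
Local Notation z k := (zline (V k) (V k.+1)).
Local Notation w k := (ct k +i* st k).

Lemma rec_constraint_conj i : (2 <= i)%N ->
  rec_constraint c s x0 t ct st i ->
  w (2 * i - 2)%N * z (2 * i - 1)%N = w (2 * i)%N * (z (2 * i - 2)%N)^*.
Proof.
move=> i_ge2 [e1 e2]; have [j [j0 j1 j2]] : exists j,
    [/\ (2 * i - 2 = j)%N, (2 * i - 1 = j.+1)%N & (2 * i = j.+2)%N].
  by exists (2 * i - 2)%N; split; lia.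
rewrite j0 j1 j2 /= in e1 e2 *.
by rewrite /zline; simpc; congr (_ +i* _); lra.
Qed.

Lemma cycle_constraints3 : size t = 2 ->
  cycle_constraints c s (x0 :: t) ct st ->
  z 1 * (c (V 3) (V 3))%:C = (z 2 * z 3)^*.
Proof.
case: t => [|a [|b [|? ?]]] //= _ [e1 e2].
by rewrite /zline; simpc; congr (_ +i* _); lra.
Qed.

Lemma cycle_constraints4 : size t = 3 ->
  cycle_constraints c s (x0 :: t) ct st ->
  z 1 * z 3 = (z 2 * z 4)^*.
Proof.
case: t => [|a [|b [|d [|? ?]]]] //= _ [e1 e2].
by rewrite /zline; simpc; congr (_ +i* _); lra.
Qed.

Lemma cycle_constraints_odd m : size t = (2 * m)%N -> (2 <= m)%N ->
  cycle_constraints c s (x0 :: t) ct st ->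
  [/\ w 2 = z 1,
      conj_rec (fun k => z k) (fun k => w k) m
    & w (2 * m)%N * z (2 * m)%N = (c (V (2 * m)) (V (2 * m)))%:C * (z (2 * m).+1)^*].
Proof.
move=> tE m_ge2; rewrite /cycle_constraints /= tE !eqSS.
have [-> ->] : (2 * m == 2)%N = false /\ (2 * m == 3)%N = false by split; apply/eqP; lia.
rewrite oddM andFb /= (_ : (2 * m)./2 = m)%N; last by rewrite mul2n doubleK.
move=> [[c2 s2] Hrec [f1 f2] _ _]; split.
- by rewrite /zline /= c2 s2.
- by move=> i /andP[i_ge2 i_le]; apply: (rec_constraint_conj i_ge2); apply: Hrec; rewrite i_ge2.
have last_x0 : nth x0 t (2 * m) = x0 by rewrite nth_default ?tE.
by rewrite /zline last_x0; simpc; congr (_ +i* _); lra.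
Qed.

Lemma cycle_constraints_even m : (size t).+1 = (2 * m)%N -> (3 <= m)%N ->
  cycle_constraints c s (x0 :: t) ct st ->
  [/\ w 2 = z 1,
      conj_rec (fun k => z k) (fun k => w k) m
    & w (2 * m)%N = zline x0 (V (2 * m))].
Proof.
move=> tE m_ge3; rewrite /cycle_constraints /= tE.
have t_odd : odd (size t) by rewrite -[odd _]negbK -oddS tE oddM.
have [-> ->] : (2 * m == 3)%N = false /\ (2 * m == 4)%N = false by split; apply/eqP; lia.
have -> : uphalf (size t) = m by apply: double_inj; rewrite odd_uphalfK // tE mul2n.
rewrite t_odd /= => -[[c2 s2] [cn sn] Hrec _ _]; split.
- by rewrite /zline /= c2 s2.
- by move=> i /andP[i_ge2 i_le]; apply: (rec_constraint_conj i_ge2); apply: Hrec; rewrite i_ge2.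
by rewrite /zline cn sn -tE.
Qed.

Lemma cycle_constraints_prod_gt0 :
  (2 <= size t)%N -> (forall b, 0 < c b b) ->
  (forall k, (0 < k <= (size t).+1)%N -> z k != 0) ->
  zline x0 (V (size t).+1) = (z (size t).+1)^* ->
  cycle_constraints c s (x0 :: t) ct st ->
  0 < \prod_(1 <= k < (size t).+2) z k.
Proof.
move=> t_ge2 diag_gt0 z_neq0 z_last cons.
have diag_gt0C k : 0 < (c (V k) (V k))%:C by rewrite ltcR.
have [t2|t_neq2] := eqVneq (size t) 2%N.
  rewrite t2; apply: cycle3_prod_gt0 (diag_gt0C 3%N) _ (cycle_constraints3 t2 cons).
  by rewrite mulf_neq0 // z_neq0 // t2.
have [t3|t_neq3] := eqVneq (size t) 3%N.
  rewrite t3; apply: cycle4_prod_gt0 _ (cycle_constraints4 t3 cons).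
  by rewrite mulf_neq0 // z_neq0 // t3.
have [t_odd|t_even] := boolP (odd (size t)).
  set m := uphalf (size t).
  have tE : (size t).+1 = (2 * m)%N by rewrite mul2n odd_uphalfK.
  have m_ge3 : (3 <= m)%N by lia.
  have [w2 Hrec w_last] := cycle_constraints_even tE m_ge3 cons.
  rewrite tE in z_neq0 z_last *.
  have m_gt0 : (0 < m)%N by lia.
  exact: (@even_cycle_prod_gt0 _ (fun k => z k) (fun k => w k) m m_gt0 w2 Hrec
    z_neq0 (etrans w_last z_last)).
set m := (size t)./2.
have tE : size t = (2 * m)%N by rewrite mul2n even_halfK.
have m_ge2 : (2 <= m)%N by lia.
have [w2 Hrec w_last] := cycle_constraints_odd tE m_ge2 cons.
rewrite tE in z_neq0 *.
have m_gt0 : (0 < m)%N by lia.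
exact: (@odd_cycle_prod_gt0 _ (fun k => z k) (fun k => w k) m _ m_gt0 w2 Hrec
  z_neq0 (diag_gt0C _) w_last).
Qed.

End CycleConstraints.

Section PolarCycle.
Variables (R : realType) (T : finType) (v C S : T -> R).

(* For C = cos θ and S = sin θ these are v_x v_y cos(θ_y - θ_x) and
   v_x v_y sin(θ_y - θ_x). *)
Definition polar_c (x y : T) : R := v x * v y * (C x * C y + S x * S y).
Definition polar_s (x y : T) : R := v x * v y * (C x * S y - S x * C y).

Variables (c s : T -> T -> R) (x0 : T) (t : seq T).
Local Notation V k := (nth x0 (x0 :: t) k.-1).

Hypothesis edges_polar : forall k, (0 < k <= (size t).+1)%N ->
  c (V k) (V k.+1) = polar_c (V k) (V k.+1) /\
  s (V k) (V k.+1) = polar_s (V k) (V k.+1).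

Lemma polar_rec_constraint i : (2 <= i)%N -> (2 * i <= (size t).+1)%N ->
  rec_constraint c s x0 t (fun k => polar_c x0 (V k)) (fun k => polar_s x0 (V k)) i.
Proof.
move=> i_ge2 i_le; rewrite /rec_constraint /=.
have [j [j0 j1 j2]] : exists j,
    [/\ (2 * i - 2 = j)%N, (2 * i - 1 = j.+1)%N & (2 * i = j.+2)%N].
  by exists (2 * i - 2)%N; split; lia.
rewrite j0 j1 j2 /=.
have /= [cA sA] := @edges_polar j.+1 ltac:(lia).
have /= [cB sB] := @edges_polar j ltac:(lia).
by rewrite cA sA cB sB /polar_c /polar_s; split; ring.
Qed.

Lemma polar_cycle_constraints :
  (2 <= size t)%N ->
  c x0 (V (size t).+1) = polar_c x0 (V (size t).+1) /\
  s x0 (V (size t).+1) = polar_s x0 (V (size t).+1) ->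
  (forall b, c b b = v b ^+ 2 * (C b ^+ 2 + S b ^+ 2)) ->
  cycle_constraints c s (x0 :: t)
    (fun k => polar_c x0 (V k)) (fun k => polar_s x0 (V k)).
Proof.
move=> t_ge2 closing_eq diag_eq; have edge_eq := @edges_polar.
have edge_ok e : e \in cyc_oedges (x0 :: t) ->
    c e.1 e.2 ^+ 2 + s e.1 e.2 ^+ 2 = c e.1 e.1 * c e.2 e.2.
  rewrite cyc_oedges_nth => /mapP[k]; rewrite mem_index_iota => k_range ->.
  by have [-> ->] := edge_eq k k_range; rewrite !diag_eq /polar_c /polar_s; ring.
have norm_ok i :
    polar_s x0 (V i) ^+ 2 + polar_c x0 (V i) ^+ 2 = c x0 x0 * c (V i) (V i).
  by rewrite !diag_eq /polar_c /polar_s; ring.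
have [t2|t_neq2] := eqVneq (size t) 2%N.
  move: edge_eq; case: t t2 => [|a [|b [|? ?]]] //= _ edge_eq.
  have /= [c1 s1] := edge_eq 1%N isT; have /= [c2 s2] := edge_eq 2%N isT.
  have /= [c3 s3] := edge_eq 3%N isT.
  by rewrite /cycle_constraints /= c1 s1 c2 s2 c3 s3 !diag_eq /polar_c /polar_s; split; ring.
have [t3|t_neq3] := eqVneq (size t) 3%N.
  move: edge_eq; case: t t3 {t_neq2} => [|a [|b [|d [|? ?]]]] //= _ edge_eq.
  have /= [c1 s1] := edge_eq 1%N isT; have /= [c2 s2] := edge_eq 2%N isT.
  have /= [c3 s3] := edge_eq 3%N isT; have /= [c4 s4] := edge_eq 4%N isT.
  by rewrite /cycle_constraints /= c1 s1 c2 s2 c3 s3 c4 s4 /polar_c /polar_s; split; ring.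
have /= [c1 s1] := edge_eq 1%N isT.
rewrite /cycle_constraints /= !eqSS (negbTE t_neq2) (negbTE t_neq3) c1 s1.
case: ifP => _; split=> //.
- move=> i /andP[i_ge2]; rewrite geq_half_double => i_le.
  by apply: polar_rec_constraint => //; lia.
- have /= [cn sn] := edge_eq (size t) ltac:(lia).
  have /= [cl sl] := edge_eq (size t).+1 ltac:(lia); rewrite [nth x0 t _]nth_default // in cl sl.
  by rewrite cn sn cl sl !diag_eq /polar_c /polar_s; split; ring.
- by case: closing_eq => /= -> ->.
- move=> i /andP[i_ge2]; rewrite geq_uphalf_double => i_le.
  by apply: polar_rec_constraint => //; lia.
Qed.

(* The auxiliary variables of a cycle, read off the virtual line (1, k). *)
Definition cycle_polar_c (p : seq T) (k : nat) : R :=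
  if p is x0 :: _ then polar_c x0 (nth x0 p k.-1) else 0.
Definition cycle_polar_s (p : seq T) (k : nat) : R :=
  if p is x0 :: _ then polar_s x0 (nth x0 p k.-1) else 0.

End PolarCycle.

Section Network.
Variables (R : realType) (Bus : finType) (ln : rel Bus).

Lemma is_cycle_nth (p : seq Bus) : is_cycle ln p ->
  exists x0 t, [/\ p = x0 :: t, (2 <= size t)%N,
    forall k, (0 < k <= (size t).+1)%N ->
      adj ln (nth x0 (x0 :: t) k.-1) (nth x0 (x0 :: t) k)
    & adj ln (nth x0 (x0 :: t) (size t)) x0].
Proof.
case: p => [|x0 t] [_ t_gt2 p_cycle] //; exists x0, t.
have adj_nth := cycle_nth p_cycle; split=> // [k k_range|]; last first.
  by have := adj_nth _ (leqnn _); rewrite /= [nth x0 t _]nth_default.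
have k_le : (k.-1 <= size t)%N by lia.
by have := adj_nth _ k_le; rewrite prednK //; lia.
Qed.

Variables (c s : Bus -> Bus -> R).
Hypothesis c_sym : forall i j, ln i j -> c i j = c j i /\ s i j = - s j i.
Local Open Scope complex_scope.

Lemma zline_adj_conj x y : adj ln x y -> zline c s y x = (zline c s x y)^*.
Proof. by rewrite /zline => /orP[] /c_sym[-> ->]; simpc. Qed.

Lemma zline_adj_neq0 x y : coupling ln c s -> (forall b, 0 < c b b) ->
  adj ln x y -> zline c s x y != 0.
Proof.
move=> cpl diag_gt0 xy; have : 0 < c x y ^+ 2 + s x y ^+ 2.
  case/orP: xy => [xy | yx]; first by rewrite cpl ?mulr_gt0.
  have [cyx syx] := c_sym yx.
  by rewrite -cyx -[s x y]opprK -syx sqrrN cpl ?mulr_gt0.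
apply: contraTneq; rewrite /zline => -[-> ->].
by rewrite expr0n /= addr0 ltxx.
Qed.

Lemma cycle_angle_sum (p : seq Bus) (ct st : nat -> R) :
  coupling ln c s -> (forall b, 0 < c b b) -> is_cycle ln p ->
  cycle_constraints c s p ct st ->
  exists k : int, \sum_(e <- cyc_oedges p) atan2 (s e.1 e.2) (c e.1 e.2) = 2 * pi * k%:~R.
Proof.
move=> cpl diag_gt0 /is_cycle_nth[x0 [t [-> t_ge2 adj_nth adj_last]]] cons.
apply: sum_atan2_2pi; rewrite cyc_oedges_nth big_map.
apply: (cycle_constraints_prod_gt0 t_ge2 diag_gt0 _ _ cons).
  by move=> k /adj_nth; exact: zline_adj_neq0.
by rewrite /= [nth x0 t _]nth_default //; exact: zline_adj_conj.
Qed.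

Variable theta : Bus -> R.
Hypothesis diag_ge0 : forall b, 0 <= c b b.
Hypothesis c_coupling : coupling ln c s.
Hypothesis theta_angle : forall i j, ln i j -> theta j - theta i = atan2 (s i j) (c i j).
Local Notation v := (fun b => Num.sqrt (c b b)).
Local Notation C := (fun b => cos (theta b)).
Local Notation S := (fun b => sin (theta b)).

Lemma adj_polar x y : adj ln x y ->
  c x y = polar_c v C S x y /\ s x y = polar_s v C S x y.
Proof.
rewrite /polar_c /polar_s; case/orP => [xy | yx].
  exact: polar_atan2_angle (diag_ge0 x) (diag_ge0 y) (c_coupling xy) (theta_angle xy).
have [cyx syx] := polar_atan2_angle (diag_ge0 y) (diag_ge0 x) (c_coupling yx)
  (theta_angle yx).
have [c_yx s_yx] := c_sym yx.
by rewrite -c_yx -[s x y]opprK -s_yx cyx syx; split; ring.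
Qed.

Lemma cycle_polar_constraints p : is_cycle ln p ->
  cycle_constraints c s p (cycle_polar_c v C S p) (cycle_polar_s v C S p).
Proof.
move=> /is_cycle_nth[x0 [t [-> t_ge2 adj_nth adj_last]]].
apply: polar_cycle_constraints => //.
- by move=> k /adj_nth /adj_polar.
- by apply: adj_polar; rewrite /adj orbC.
- by move=> b; rewrite sqr_sqrtr // cos2Dsin2 mulr1.
Qed.

End Network.

Theorem proposition8 (R : realType) (Bus : finType) (ln : rel Bus)
  (Gen : {set Bus}) (G B : Bus -> Bus -> R)
  (pd qd Vlo Vhi pmin pmax qmin qmax : Bus -> R)
  (Hln : lines_ok ln)
  (HV : forall i, 0 < Vlo i /\ Vlo i <= Vhi i)
  (Hgen : forall i, i \in Gen -> pmin i <= pmax i /\ qmin i <= qmax i)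
  (m : nat) (cyc : 'I_m -> seq Bus) (Hbasis : cycle_basis ln cyc) :
  (* (a) validity *)
  (forall (pg qg : Bus -> R) (c s : Bus -> Bus -> R) (theta : Bus -> R),
     OPF_feasible ln Gen G B pd qd Vlo Vhi pmin pmax qmin qmax pg qg c s theta ->
     exists ct st : 'I_m -> nat -> R,
       forall k, cycle_constraints c s (cyc k) (ct k) (st k))
  /\
  (* (b) angle consistency around each basis cycle *)
  (forall (pg qg : Bus -> R) (c s : Bus -> Bus -> R),
     ALT ln Gen G B pd qd Vlo Vhi pmin pmax qmin qmax pg qg c s ->
     coupling ln c s ->
     (exists ct st : 'I_m -> nat -> R,
        forall k, cycle_constraints c s (cyc k) (ct k) (st k)) ->
     forall k, exists z : int,
       \sum_(e <- cyc_oedges (cyc k)) atan2 (s e.1 e.2) (c e.1 e.2)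
         = 2 * pi * z%:~R).
Proof.
case: Hbasis => basis_cycles _ _.
have diag_gt0 (c : Bus -> Bus -> R) :
    (forall i, Vlo i ^+ 2 <= c i i <= Vhi i ^+ 2) -> forall b, 0 < c b b.
  move=> c_bnd b; apply: lt_le_trans (andP (c_bnd b)).1.
  by rewrite exprn_gt0 //; case: (HV b).
split.
- move=> pg qg c s theta [[_ _ c_bnd c_sym _] c_coupling theta_angle].
  have diag_ge0 b := ltW (diag_gt0 c c_bnd b).
  pose v b := Num.sqrt (c b b); pose C b := cos (theta b); pose S b := sin (theta b).
  exists (fun k => cycle_polar_c v C S (cyc k)), (fun k => cycle_polar_s v C S (cyc k)).
  move=> k; exact: (cycle_polar_constraints c_sym diag_ge0 c_coupling theta_angle
    (basis_cycles k)).
- move=> pg qg c s [_ _ c_bnd c_sym _] c_coupling [ct [st cons]] k.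
  by have := cycle_angle_sum c_sym c_coupling (diag_gt0 c c_bnd) (basis_cycles k) (cons k).
Qed.
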